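(* Let $X$ be a Banach space and $\alpha$ a left tensorial norm on $c_0\otimes X$. Then there exists a unique left tensorial norm $\tilde\alpha$ on $\ell_\infty\otimes X$ whose restriction to $c_0\otimes X$ (with $c_0$ regarded canonically as a subspace of $\ell_\infty$) equals $\alpha$.
   Context: A norm $\alpha$ on $Y\otimes X$ ($Y,X$ Banach spaces) is left tensorial if $\alpha(y\otimes x)=\|y\|\|x\|$ for all $y,x$ and for every bounded operator $T\colon Y\to Y$, $T\otimes I_X$ is bounded on $(Y\otimes X,\alpha)$ with $\|T\otimes I_X\|\le\|T\|$. *)

From HB Require Import structures.
From mathcomp Require Import all_boot all_order all_algebra.
From mathcomp Require Import all_classical all_reals all_analysis.
Set Implicit Arguments. Unset Strict Implicit. Unset Printing Implicit Defensive.
Import Order.TTheory GRing.Theory Num.Theory.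
Import numFieldNormedType.Exports.
Local Open Scope classical_set_scope.
Local Open Scope ring_scope.

Definition seqR (R : realType) := nat -> R.

Definition linf (R : realType) (y : nat -> R) : Prop :=
  exists M : R, forall n, `|y n| <= M.

Definition c0 (R : realType) (y : nat -> R) : Prop :=
  y @ \oo --> (0 : R).

Definition supnorm (R : realType) (y : nat -> R) : R :=
  sup [set `|y n| | n in [set: nat]].

Section Tensors.
Variables (R : realType) (X : normedModType R).
Variable P : (nat -> R) -> Prop. (* the subspace Y of nat -> R *)

Definition linear_on (W : lmodType R) (f : (nat -> R) -> W) : Prop :=
  forall (a : R) (y z : nat -> R), P y -> P z -> f (a *: y + z) = a *: f y + f z.

(* A finite formal sum  sum_i y_i (x) x_i  with y_i in Y. *)
Definition pretensor := seq ((nat -> R) * X).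
Fixpoint in_Y (s : pretensor) : Prop :=
  if s is p :: s' then P p.1 /\ in_Y s' else True.

(* sum_i y_i (x) x_i = 0 in the algebraic tensor product Y (x) X iff
   sum_i phi(y_i) x_i = 0 for every linear functional phi on Y. *)
Definition tzero (s : pretensor) : Prop :=
  forall phi : (nat -> R) -> R^o, linear_on phi ->
    \sum_(p <- s) phi p.1 *: p.2 = 0.

Definition topp (s : pretensor) : pretensor := map (fun p => (- p.1, p.2)) s.
Definition tscale (c : R) (s : pretensor) : pretensor :=
  map (fun p => (c *: p.1, p.2)) s.
Definition tmap (T : (nat -> R) -> (nat -> R)) (s : pretensor) : pretensor :=
  map (fun p => (T p.1, p.2)) s.

Definition teq (s t : pretensor) : Prop := tzero (s ++ topp t).

(* alpha is a norm on the algebraic tensor product Y (x) X (given on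
   representatives; values on sequences not in Y are irrelevant) *)
Definition tensor_norm (alpha : pretensor -> R) : Prop :=
  [/\ (forall s t, in_Y s -> in_Y t -> teq s t -> alpha s = alpha t),
      (forall s, in_Y s -> (alpha s = 0 <-> tzero s)),
      (forall s t, in_Y s -> in_Y t -> alpha (s ++ t) <= alpha s + alpha t) &
      (forall c s, in_Y s -> alpha (tscale c s) = `|c| * alpha s)].

Definition left_tensorial (nY : (nat -> R) -> R) (alpha : pretensor -> R) : Prop :=
  [/\ tensor_norm alpha,
      (forall y x, P y -> alpha [:: (y, x)] = nY y * `|x|) &
      (forall (T : (nat -> R) -> (nat -> R)) (C : R),
          (forall y, P y -> P (T y)) -> linear_on T ->
          (forall y, P y -> nY (T y) <= C * nY y) ->
          forall s, in_Y s -> alpha (tmap T s) <= C * alpha s)].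
End Tensors.

From mathcomp Require Import all_boot all_order all_algebra.
From mathcomp Require Import all_classical all_reals all_analysis.
From mathcomp Require Import lra.
Import Order.TTheory GRing.Theory Num.Theory.
Import numFieldNormedType.Exports.
Set Implicit Arguments. Unset Strict Implicit. Unset Printing Implicit Defensive.
Local Open Scope classical_set_scope.
Local Open Scope ring_scope.

(** For a tensor s in l_oo (x) X put beta(s) = sup alpha((S (x) I) s), S ranging
    over the linear contractions S : l_oo -> c_0.  Left tensoriality of alpha makes
    beta a left tensorial norm, and beta = alpha on c_0 (x) X because the
    truncations P_N approximate the identity uniformly on the finitely many
    sequences of a tensor in c_0 (x) X.  A left tensorial extension gamma satisfies
    gamma(s) >= gamma((S (x) I) s) = alpha((S (x) I) s), hence gamma >= beta.
    Conversely, a finite e-net for the finitely many bounded sequences of s gives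
    an operator S : l_oo -> c_0 sampling finitely many coordinates and a
    contraction J : c_0 -> l_oo spreading them back, with J S e-close to the
    identity on those sequences; so gamma(s) is approximately
    gamma((J S (x) I) s) <= alpha((S (x) I) s) <= beta(s). *)

Lemma ler_addgt0_mulr (R : realFieldType) (a c K : R) : 0 <= K ->
  (forall e, 0 < e -> a <= c + e * K) -> a <= c.
Proof.
move=> K0 le_ac; apply/ler_addgt0Pr => e e0.
have K1 : 0 < K + 1 by rewrite ltr_wpDl.
apply: le_trans (le_ac _ (divr_gt0 e0 K1)) _.
by rewrite lerD2l mulrAC ler_pdivrMr // ler_pM2l // lerDl.
Qed.

Section Subspace.
Variable R : realType.
Implicit Types (P : (nat -> R) -> Prop) (y z : nat -> R).

Definition subspace P := P 0 /\ forall a y z, P y -> P z -> P (a *: y + z).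

Section SubspaceTheory.
Variable P : (nat -> R) -> Prop.
Hypothesis sP : subspace P.

Lemma subspaceZ a y : P y -> P (a *: y).
Proof. by move=> Py; have := sP.2 a y 0 Py sP.1; rewrite addr0. Qed.

Lemma subspaceB y z : P y -> P z -> P (y - z).
Proof. by move=> Py Pz; rewrite -scaleN1r addrC; apply: sP.2. Qed.

Variables (W : lmodType R) (f : (nat -> R) -> W).
Hypothesis f_lin : linear_on P f.

Lemma linear_on0 : f 0 = 0.
Proof.
have := f_lin 1 sP.1 sP.1; rewrite scale1r addr0 scale1r => /eqP.
by rewrite -subr_eq subrr eq_sym => /eqP.
Qed.

Lemma linear_onZ a y : P y -> f (a *: y) = a *: f y.
Proof. by move=> Py; have := f_lin a Py sP.1; rewrite !addr0 linear_on0 addr0. Qed.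

Lemma linear_onB y z : P y -> P z -> f (y - z) = f y - f z.
Proof.
by move=> Py Pz; rewrite -[- z]scaleN1r [y + _]addrC f_lin // scaleN1r addrC.
Qed.

End SubspaceTheory.
End Subspace.

Section Slices.
Variables (R : realType) (X : normedModType R).
Local Notation tensor := (@pretensor R X).
Implicit Types (P Q : (nat -> R) -> Prop) (y z : nat -> R) (s t : tensor).

Lemma in_YP P s : in_Y P s <-> {in s, forall p, P p.1}.
Proof.
elim: s => [|q s IH] /=; first by split.
rewrite IH; split => [[Pq Ps] p|Ps].
  by rewrite inE => /predU1P[->|/Ps].
by split=> [|p ps]; apply: Ps; rewrite inE ?eqxx ?ps ?orbT.
Qed.

Lemma in_Y_cat P s t : in_Y P (s ++ t) <-> in_Y P s /\ in_Y P t.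
Proof.
rewrite !in_YP; split=> [Pst|[Ps Pt] p]; last by rewrite mem_cat => /orP[/Ps|/Pt].
by split=> p ps; apply: Pst; rewrite mem_cat ps ?orbT.
Qed.

Lemma sub_in_Y P Q s : (forall y, P y -> Q y) -> in_Y P s -> in_Y Q s.
Proof. by move=> PQ /in_YP Ps; apply/in_YP => p /Ps /PQ. Qed.

Lemma in_Y_map P Q (g : (nat -> R) * X -> (nat -> R) * X) s :
  (forall p, P p.1 -> Q (g p).1) -> in_Y P s -> in_Y Q (map g s).
Proof. by move=> PQ /in_YP Ps; apply/in_YP => _ /mapP[p ps ->]; apply/PQ/Ps. Qed.

Definition slice (f : (nat -> R) -> R) s : X := \sum_(p <- s) f p.1 *: p.2.

Lemma slice_cons f y x s : slice f ((y, x) :: s) = f y *: x + slice f s.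
Proof. by rewrite /slice big_cons. Qed.

Lemma slice_cat f s t : slice f (s ++ t) = slice f s + slice f t.
Proof. exact: big_cat. Qed.

Lemma slice_tmap f U s : slice f (tmap U s) = slice (f \o U) s.
Proof. by rewrite /slice big_map. Qed.

Section LinearSlices.
Variable P : (nat -> R) -> Prop.
Hypothesis sP : subspace P.

Lemma teqP s t : in_Y P t ->
  teq P s t <-> forall phi, linear_on P phi -> slice phi s = slice phi t.
Proof.
move=> Pt; have slice_topp (phi : (nat -> R) -> R) :
    linear_on P phi -> slice phi (topp t) = - slice phi t.
  move=> phi_lin; rewrite /slice big_map -sumrN.
  apply: eq_big_seq => p /((in_YP _ _).1 Pt) Pp /=.
  by rewrite -[- p.1]scaleN1r (linear_onZ sP) // scaleN1r scaleNr.
have teq_slice (phi : (nat -> R) -> R) : linear_on P phi ->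
    \sum_(p <- s ++ topp t) phi p.1 *: p.2 = slice phi s - slice phi t.
  by move=> phi_lin; rewrite big_cat -slice_topp.
split=> [st phi phi_lin|st phi phi_lin].
  by apply/eqP; rewrite -subr_eq0 -teq_slice //; apply/eqP/st.
by rewrite teq_slice // st // subrr.
Qed.

Definition eliminate y k s : tensor := map (fun p => (p.1 - (p.1 k / y k) *: y, p.2)) s.

Lemma slice_eliminate f y x k s : linear_on P f -> P y -> in_Y P s -> y k != 0 ->
  slice (fun z => z k) ((y, x) :: s) = 0 ->
  slice f (eliminate y k s) = slice f ((y, x) :: s).
Proof.
move=> f_lin Py Ps yk0; rewrite !slice_cons addrC => /eqP; rewrite addr_eq0 => /eqP sk.
rewrite /slice big_map /=.
rewrite (eq_big_seq (fun p => f p.1 *: p.2 - (f y / y k) *: (p.1 k *: p.2))); last first.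
  move=> p /((in_YP _ _).1 Ps) Pp /=.
  rewrite (linear_onB f_lin) ?(linear_onZ sP f_lin) //; last exact: subspaceZ.
  rewrite scalerBl scalerA.
  by congr (_ - (_ *: _)); rewrite /GRing.scale /= mulrC mulrA mulrAC.
rewrite sumrB -scaler_sumr -/(slice f s) -/(slice (fun z => z k) s) sk.
by rewrite scalerN opprK scalerA divfK // addrC.
Qed.

Lemma linear_on_coord k : linear_on P (fun z : nat -> R => z k).
Proof. by []. Qed.

(* Gaussian elimination: a pivot term (y, x) with y k != 0 is cleared from the
   other terms without changing any slice. *)
Lemma slice_coord0 s : in_Y P s -> (forall k, slice (fun z => z k) s = 0) ->
  forall f, linear_on P f -> slice f s = 0.
Proof.
have [n] := ubnP (size s); elim: n s => // n IH [|[y x] s] sz.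
  by move=> *; rewrite /slice big_nil.
move=> /= [Py Ps] s0 f f_lin.
have [[k yk0]|y0] := pselect (exists k, y k != 0).
  have eliminateP : in_Y P (eliminate y k s).
    by apply: in_Y_map Ps => p Pp /=; apply: subspaceB => //; apply: subspaceZ.
  rewrite -(slice_eliminate f_lin Py Ps yk0 (s0 k)).
  apply: IH eliminateP _ _ f_lin; first by rewrite size_map.
  by move=> j; rewrite (slice_eliminate (linear_on_coord j) Py Ps yk0 (s0 k)).
have {}y0 : y = 0.
  by apply/funext => k; apply: contrapT => yk0; apply: y0; exists k; apply/eqP.
subst y.
rewrite slice_cons (linear_on0 sP f_lin) scale0r add0r; apply: IH => // j.
by have := s0 j; rewrite slice_cons /= scale0r add0r.
Qed.

Lemma tzero_coordP s : in_Y P s ->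
  tzero P s <-> forall k, slice (fun z => z k) s = 0.
Proof.
move=> Ps; split=> [s0 k|s0]; first exact: s0 _ (linear_on_coord k).
exact: slice_coord0.
Qed.

Section TensorNorm.
Variables (nY : (nat -> R) -> R) (alpha : tensor -> R).
Hypothesis alphaN : tensor_norm P alpha.
Hypothesis alpha_pure : forall y x, P y -> alpha [:: (y, x)] = nY y * `|x|.

Lemma tnorm_nil : alpha [::] = 0.
Proof. by case: alphaN => _ alpha0 _ _; apply/alpha0 => // phi _; rewrite big_nil. Qed.

Lemma tnorm_ge0 s : in_Y P s -> 0 <= alpha s.
Proof.
move=> Ps; case: alphaN => _ alpha0 alphaD alphaZ.
have Pms : in_Y P (tscale (-1) s) by apply: in_Y_map Ps => p; apply: subspaceZ.
have alpha_s_ms : alpha (s ++ tscale (-1) s) = 0.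
  apply/alpha0; first exact/in_Y_cat.
  move=> phi phi_lin; rewrite -[LHS]/(slice phi _) slice_cat /slice big_map.
  rewrite -big_split big1_seq //= => p /((in_YP _ _).1 Ps) Pp.
  by rewrite (linear_onZ sP phi_lin) // scaleN1r scaleNr subrr.
have := alphaD _ _ Ps Pms; rewrite alpha_s_ms alphaZ // normrN normr1 mul1r => ?; lra.
Qed.

Lemma tnorm_le_sum s : in_Y P s -> alpha s <= \sum_(p <- s) nY p.1 * `|p.2|.
Proof.
elim: s => [|[y x] s IH] /= => [_|[Py Ps]]; first by rewrite tnorm_nil big_nil.
case: alphaN => _ _ alphaD _; rewrite big_cons -alpha_pure //.
exact: le_trans (alphaD [:: (y, x)] s (conj Py I) Ps) (lerD (lexx _) (IH Ps)).
Qed.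

Lemma tnorm_perturb U e s : (forall y, P y -> P (U y)) -> in_Y P s ->
  in_Y (fun y => nY (y - U y) <= e) s ->
  alpha s <= alpha (tmap U s) + e * \sum_(p <- s) `|p.2|.
Proof.
move=> PU Ps close.
pose d := map (fun p => (p.1 - U p.1, p.2)) s.
have PUs : in_Y P (tmap U s) by apply: in_Y_map Ps => p /PU.
have Pd : in_Y P d by apply: in_Y_map Ps => p Pp; apply: subspaceB => //; apply: PU.
have -> : alpha s = alpha (tmap U s ++ d).
  case: alphaN => alpha_teq _ _ _; apply: alpha_teq => //; first exact/in_Y_cat.
  apply/teqP; first exact/in_Y_cat.
  move=> phi phi_lin; rewrite slice_cat slice_tmap /slice big_map -big_split /=.
  apply: eq_big_seq => p /((in_YP _ _).1 Ps) Pp.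
  rewrite (linear_onB phi_lin) //; last exact: PU.
  by rewrite scalerBl addrC subrK.
case: alphaN => _ _ alphaD _; apply: le_trans (alphaD _ _ PUs Pd) _.
rewrite lerD2l; apply: le_trans (tnorm_le_sum Pd) _.
rewrite big_map mulr_sumr big_seq [leRHS]big_seq.
by apply: ler_sum => p /((in_YP _ _).1 close) Hp; rewrite ler_wpM2r.
Qed.

Lemma tnorm_le_approx s B : in_Y P s ->
  (forall e, 0 < e -> exists U, [/\ forall y, P y -> P (U y),
     in_Y (fun y => nY (y - U y) <= e) s & alpha (tmap U s) <= B]) ->
  alpha s <= B.
Proof.
move=> Ps approx; apply: (@ler_addgt0_mulr _ _ _ (\sum_(p <- s) `|p.2|)).
  by rewrite sumr_ge0.
move=> e /approx[U [PU close le_UB]].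
by apply: le_trans (tnorm_perturb PU Ps close) _; rewrite lerD2r.
Qed.

End TensorNorm.
End LinearSlices.

Lemma left_tensorial_contraction P nY alpha T s : left_tensorial P nY alpha ->
  (forall y, P y -> P (T y)) -> linear_on P T -> (forall y, P y -> nY (T y) <= nY y) ->
  in_Y P s -> alpha (tmap T s) <= alpha s.
Proof.
case=> _ _ alpha_op PT T_lin T_le Ps; rewrite -[leRHS]mul1r.
by apply: alpha_op => // y Py; rewrite mul1r T_le.
Qed.

End Slices.

Section SequenceSpaces.
Variable R : realType.
Implicit Types (y z : nat -> R).

Lemma c0_subspace : subspace (@c0 R).
Proof.
split=> [|a y z y0 z0]; first exact: cvg_cst.
by have := cvgD (cvgZr (k := a) y0) z0; rewrite scaler0 addr0; apply.
Qed.

Lemma linf_subspace : subspace (@linf R).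
Proof.
split=> [|a y z [My yM] [Mz zM]]; first by exists 0 => n; rewrite normr0.
exists (`|a| * My + Mz) => n; apply: le_trans (ler_normD _ _) _.
by rewrite normrZ lerD ?ler_wpM2l.
Qed.

Lemma c0_linf y : c0 y -> linf y.
Proof.
move=> y0; have [M [_ yM]] := cvg_seq_bounded (cvgP _ y0).
by exists (M + 1) => n; apply: yM => //; rewrite ltrDl.
Qed.

Lemma supnorm_ub y k : linf y -> `|y k| <= supnorm y.
Proof. by move=> [M yM]; apply: ub_le_sup; [exists M => _ [n _ <-]|exists k]. Qed.

Lemma supnorm_le y B : (forall k, `|y k| <= B) -> supnorm y <= B.
Proof. by move=> yB; apply: ge_sup => [|_ [n _ <-]]; [exists `|y 0%N|, 0%N|]. Qed.

Lemma supnorm_ge0 y : linf y -> 0 <= supnorm y.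
Proof. by move=> /(supnorm_ub 0); apply: le_trans. Qed.

Definition cutoff n y : nat -> R := fun k => if (k < n)%N then y k else 0.

Lemma cutoff_c0 n y : c0 (cutoff n y).
Proof.
apply/cvgr0Pnorm_le => e e0; exists n => // k /= nk.
by rewrite /cutoff ltnNge nk normr0 ltW.
Qed.

Lemma cutoff_linear n a y z : cutoff n (a *: y + z) = a *: cutoff n y + cutoff n z.
Proof.
apply/funext => k.
change (cutoff n (a *: y + z) k = a * cutoff n y k + cutoff n z k).
by rewrite /cutoff; case: ifP => // _; rewrite mulr0 addr0.
Qed.

Lemma supnorm_cutoff n y : linf y -> supnorm (cutoff n y) <= supnorm y.
Proof.
move=> yb; apply: supnorm_le => k; rewrite /cutoff; case: ifP => _.
  exact: supnorm_ub.
by rewrite normr0 supnorm_ge0.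
Qed.

Lemma c0_cutoff_close y e : c0 y -> 0 < e ->
  exists N, forall M, (N <= M)%N -> supnorm (y - cutoff M y) <= e.
Proof.
move=> y0 e0; have [N _ yN] := cvgr0_norm_le _ y0 _ e0.
exists N => M NM; apply: supnorm_le => k.
rewrite !fctE /cutoff; case: ifP => [_|]; first by rewrite subrr normr0 ltW.
by rewrite subr0 => /negbT; rewrite -leqNgt => /(leq_trans NM); apply: yN.
Qed.

Lemma linf_comp y (g : nat -> nat) : linf y -> linf (y \o g).
Proof. by move=> [M yM]; exists M => n; apply: yM. Qed.

Lemma supnorm_comp y (g : nat -> nat) : linf y -> supnorm (y \o g) <= supnorm y.
Proof. by move=> yb; apply: supnorm_le => n; exact: (supnorm_ub (g n) yb). Qed.

Lemma close_of_truncn_eq (M d u v : R) : 0 < d -> `|u| <= M -> `|v| <= M ->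
  Num.truncn ((u + M) / d) = Num.truncn ((v + M) / d) -> `|u - v| <= d.
Proof.
move=> d0; rewrite !ler_norml => /andP[uM Mu] /andP[vM Mv].
set a := (u + M) / d; set b := (v + M) / d => ab.
have a0 : 0 <= a by apply: divr_ge0 (ltW d0); lra.
have b0 : 0 <= b by apply: divr_ge0 (ltW d0); lra.
have /andP[la ua] := truncn_itv a0; have /andP[lb ub] := truncn_itv b0.
move: la ua; rewrite ab -natr1 => la ua.
have -> : u - v = (a - b) * d by rewrite -mulrBl divfK ?gt_eqF //; lra.
rewrite -ler_norml normrM (gtr0_norm d0) ler_piMl ?(ltW d0) // ler_norml; lra.
Qed.

(* Indices n with the same levels truncn ((y n + M) / d), y in ys, are d-close;
   there are finitely many level vectors and [pick] chooses an index for each. *)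
Lemma finite_net (ys : seq (nat -> R)) (d : R) :
  0 < d -> (forall y, y \in ys -> linf y) ->
  exists N (pick cell : nat -> nat), forall n, (cell n < N)%N /\
    forall y, y \in ys -> `|y n - y (pick (cell n))| <= d.
Proof.
move=> d0 ys_bdd.
have [M ysM] : exists M : R, forall y, y \in ys -> forall n, `|y n| <= M.
  elim: ys ys_bdd => [|y ys IH] bdd; first by exists 0.
  have [My yM] := bdd y (mem_head _ _).
  have [Ms ysM] : exists Ms : R, forall z, z \in ys -> forall n, `|z n| <= Ms.
    by apply: IH => z zs; apply: bdd; rewrite inE zs orbT.
  exists (Num.max My Ms) => z; rewrite inE => /predU1P[->|/ysM zM] n.
    by rewrite le_max yM.
  by rewrite le_max zM orbT.
pose K := Num.truncn ((M + M) / d).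
pose level y n : 'I_K.+1 := inord (Num.truncn ((y n + M) / d)).
pose cell n := val (enum_rank (map_tuple (level^~ n) (in_tuple ys))).
pose pick j := xget 0%N [set m | cell m = j].
exists #|{: (size ys).-tuple 'I_K.+1}|, pick, cell => n; split; first exact: ltn_ord.
have : cell (pick (cell n)) = cell n.
  exact: (xgetPex 0%N (ex_intro [set m | cell m = cell n] n erefl)).
move=> /val_inj /enum_rank_inj /(congr1 val) /= /(eq_in_map _ _ _).2 same_level y ys_y.
have level_le m : (Num.truncn ((y m + M) / d) < K.+1)%N.
  rewrite ltnS le_truncn // ler_pM2r ?invr_gt0 // lerD2r.
  by have := ysM y ys_y m; rewrite ler_norml => /andP[].
have := same_level y ys_y => /(congr1 val) /=; rewrite !inordK // => eq_level.
by apply: close_of_truncn_eq (esym eq_level) => //; apply: ysM.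
Qed.

End SequenceSpaces.

Section Extension.
Variables (R : realType) (X : normedModType R) (alpha : @pretensor R X -> R).
Hypothesis alphaT : left_tensorial (@c0 R) (@supnorm R) alpha.
Local Notation tensor := (@pretensor R X).
Implicit Types (s t : tensor) (y z : nat -> R) (S T : (nat -> R) -> nat -> R).

Let alphaN : tensor_norm (@c0 R) alpha. Proof. by case: alphaT. Qed.
Let alpha_pure y (x : X) : c0 y -> alpha [:: (y, x)] = supnorm y * `|x|.
Proof. by case: alphaT => _ pure _; apply: pure. Qed.

Definition contraction_into_c0 S := [/\ linear_on (@linf R) S,
  forall y, linf y -> c0 (S y) & forall y, linf y -> supnorm (S y) <= supnorm y].

Lemma contraction_sample N (pick : nat -> nat) :
  contraction_into_c0 (fun y => cutoff N (y \o pick)).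
Proof.
split=> [a y z _ _|y _|y yb]; last 2 first.
- exact: cutoff_c0.
- exact: le_trans (supnorm_cutoff _ (linf_comp _ yb)) (supnorm_comp _ yb).
have -> : (a *: y + z) \o pick = a *: (y \o pick) + (z \o pick) by [].
exact: cutoff_linear.
Qed.

Lemma contraction_cutoff n : contraction_into_c0 (cutoff n).
Proof. exact: contraction_sample n id. Qed.

Section Contraction.
Variable S : (nat -> R) -> nat -> R.
Hypothesis contrS : contraction_into_c0 S.

Lemma in_Y_contraction s : in_Y (@linf R) s -> in_Y (@c0 R) (tmap S s).
Proof. by case: contrS => _ S_c0 _; apply: in_Y_map => p /S_c0. Qed.

Lemma alpha_contraction s : in_Y (@c0 R) s -> alpha (tmap S s) <= alpha s.
Proof.
case: contrS => S_lin S_c0 S_le; apply: left_tensorial_contraction alphaT _ _ _.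
- by move=> y /c0_linf /S_c0.
- by move=> a y z /c0_linf yb /c0_linf zb; apply: S_lin.
- by move=> y /c0_linf /S_le.
Qed.

Lemma linear_on_contraction (phi : (nat -> R) -> R) :
  linear_on (@c0 R) phi -> linear_on (@linf R) (phi \o S).
Proof.
case: contrS => S_lin S_c0 _ phi_lin a y z yb zb /=.
by rewrite S_lin //; apply: phi_lin; apply: S_c0.
Qed.

Lemma tzero_contraction s : tzero (@linf R) s -> tzero (@c0 R) (tmap S s).
Proof.
move=> s0 phi phi_lin; rewrite -[LHS]/(slice phi _) slice_tmap.
exact: s0 _ (linear_on_contraction phi_lin).
Qed.

Lemma teq_contraction s t : in_Y (@linf R) t ->
  teq (@linf R) s t -> teq (@c0 R) (tmap S s) (tmap S t).
Proof.
move=> bt /(teqP (linf_subspace R) _ bt) st.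
apply/(teqP (c0_subspace R)); first exact: in_Y_contraction.
by move=> phi phi_lin; rewrite !slice_tmap; apply/st/linear_on_contraction.
Qed.

End Contraction.

Definition ext_norm s := sup [set alpha (tmap S s) | S in contraction_into_c0].

Lemma ext_norm_ge S s : contraction_into_c0 S -> in_Y (@linf R) s ->
  alpha (tmap S s) <= ext_norm s.
Proof.
move=> contrS bs; apply: ub_le_sup; last by exists S.
exists (\sum_(p <- s) supnorm p.1 * `|p.2|) => _ [U contrU <-].
apply: le_trans (tnorm_le_sum alphaN alpha_pure (in_Y_contraction contrU bs)) _.
rewrite /tmap big_map big_seq [leRHS]big_seq; apply: ler_sum => p /=.
by case: contrU => _ _ U_le /((in_YP _ _).1 bs) /U_le; apply: ler_wpM2r.
Qed.

Lemma ext_norm_le s B : (forall S, contraction_into_c0 S -> alpha (tmap S s) <= B) ->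
  ext_norm s <= B.
Proof.
move=> le_B; apply: ge_sup => [|_ [S contrS <-]]; last exact: le_B.
by exists (alpha (tmap (cutoff 0) s)), (cutoff 0) => //; apply: contraction_cutoff.
Qed.

Lemma ext_norm_ge0 s : in_Y (@linf R) s -> 0 <= ext_norm s.
Proof.
move=> bs; have contr0 := contraction_cutoff 0.
apply: le_trans _ (ext_norm_ge contr0 bs).
exact: (tnorm_ge0 (c0_subspace R) alphaN (in_Y_contraction contr0 bs)).
Qed.

Lemma ext_norm_teq s t : in_Y (@linf R) s -> in_Y (@linf R) t ->
  teq (@linf R) s t -> ext_norm s = ext_norm t.
Proof.
move=> bs bt st.
have alpha_eq S : contraction_into_c0 S -> alpha (tmap S s) = alpha (tmap S t).
  move=> contrS; case: alphaN => alpha_teq _ _ _.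
  by apply: alpha_teq; [exact: in_Y_contraction|exact: in_Y_contraction|exact: teq_contraction].
rewrite /ext_norm; congr sup; apply/seteqP.
by split=> _ [S contrS <-]; exists S => //; rewrite alpha_eq.
Qed.

Lemma ext_norm_zero s : in_Y (@linf R) s -> ext_norm s = 0 <-> tzero (@linf R) s.
Proof.
move=> bs; case: alphaN => _ alpha0 _ _; split=> [ext0|s0].
  apply/(tzero_coordP (linf_subspace R) bs) => k.
  have contrk := contraction_cutoff k.+1; have cs := in_Y_contraction contrk bs.
  have : alpha (tmap (cutoff k.+1) s) = 0.
    apply/le_anti; rewrite (tnorm_ge0 (c0_subspace R) alphaN cs) andbT -ext0.
    exact: ext_norm_ge.
  move=> /(alpha0 _ cs) /(tzero_coordP (c0_subspace R) cs) /(_ k).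
  rewrite slice_tmap; suff -> : (fun z => z k) \o cutoff k.+1 = (fun z => z k) by [].
  by apply/funext => z; rewrite /= /cutoff ltnSn.
apply/le_anti; rewrite ext_norm_ge0 // andbT; apply: ext_norm_le => S contrS.
by rewrite (alpha0 _ (in_Y_contraction contrS bs)).2 //; apply: tzero_contraction.
Qed.

Lemma ext_norm_cat s t : in_Y (@linf R) s -> in_Y (@linf R) t ->
  ext_norm (s ++ t) <= ext_norm s + ext_norm t.
Proof.
move=> bs bt; apply: ext_norm_le => S contrS; rewrite /tmap map_cat.
case: alphaN => _ _ alphaD _.
apply: le_trans (alphaD _ _ (in_Y_contraction contrS bs) (in_Y_contraction contrS bt)) _.
by rewrite lerD // ext_norm_ge.
Qed.

Lemma ext_norm_scale c s : in_Y (@linf R) s -> ext_norm (tscale c s) = `|c| * ext_norm s.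
Proof.
have in_Y_tscale c' t : in_Y (@linf R) t -> in_Y (@linf R) (tscale c' t).
  by move=> bt; apply: in_Y_map bt => p; exact: subspaceZ (linf_subspace R) c' p.1.
have le_scale c' t : in_Y (@linf R) t -> ext_norm (tscale c' t) <= `|c'| * ext_norm t.
  move=> bt; apply: ext_norm_le => S contrS; case: alphaN => _ _ _ alphaZ.
  have -> : tmap S (tscale c' t) = tscale c' (tmap S t).
    rewrite /tmap /tscale -!map_comp; apply/eq_in_map => p /((in_YP _ _).1 bt) bp /=.
    by case: contrS => S_lin _ _; rewrite (linear_onZ (linf_subspace R) S_lin).
  by rewrite alphaZ ?ler_wpM2l ?ext_norm_ge //; apply: in_Y_contraction.
move=> bs; apply/le_anti; rewrite le_scale //=.
have [->|c0] := eqVneq c 0; first by rewrite normr0 mul0r; apply/ext_norm_ge0/in_Y_tscale.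
have scaleVK : tscale c^-1 (tscale c s) = s.
  rewrite /tscale -map_comp -[RHS]map_id; apply: eq_map => -[y x] /=.
  by rewrite scalerA mulVf ?scale1r.
rewrite -{1}scaleVK -ler_pdivlMl ?normr_gt0 // -normfV.
exact: le_scale (in_Y_tscale _ _ bs).
Qed.

Lemma ext_norm_pure y (x : X) : linf y -> ext_norm [:: (y, x)] = supnorm y * `|x|.
Proof.
move=> yb; apply/le_anti/andP; split.
  apply: ext_norm_le => S [_ S_c0 S_le]; rewrite /= alpha_pure; last exact: S_c0.
  by rewrite ler_wpM2r ?S_le.
have [->|x0] := eqVneq x 0; first by rewrite normr0 mulr0 ext_norm_ge0.
rewrite -ler_pdivlMr ?normr_gt0 //; apply: supnorm_le => k.
have -> : y k = cutoff k.+1 y k by rewrite /cutoff ltnSn.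
apply: le_trans (supnorm_ub _ (c0_linf (cutoff_c0 _ _))) _.
rewrite ler_pdivlMr ?normr_gt0 // -alpha_pure; last exact: cutoff_c0.
exact: (ext_norm_ge (contraction_cutoff k.+1) (s := [:: (y, x)])).
Qed.

Section BoundedOperator.
Variables (T : (nat -> R) -> nat -> R) (C : R).
Hypotheses (T_linf : forall y, linf y -> linf (T y)) (T_lin : linear_on (@linf R) T).
Hypothesis T_le : forall y, linf y -> supnorm (T y) <= C * supnorm y.

Lemma bounded_op_ge0 : 0 <= C.
Proof.
pose one : nat -> R := fun=> 1; have one_b : linf one by exists 1 => n; rewrite normr1.
have one_pos : 0 < supnorm one by apply: lt_le_trans (supnorm_ub 0 one_b); rewrite normr1.
rewrite -(pmulr_lge0 _ one_pos); apply: le_trans (T_le one_b).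
exact/supnorm_ge0/T_linf.
Qed.

Lemma contraction_comp S D : contraction_into_c0 S -> C < D ->
  contraction_into_c0 (fun y => D^-1 *: S (T y)).
Proof.
move=> [S_lin S_c0 S_le] CD; have D0 : 0 < D by apply: le_lt_trans bounded_op_ge0 CD.
split=> [a y z yb zb|y yb|y yb].
- rewrite T_lin // S_lin; try by apply: T_linf.
  by rewrite scalerDr !scalerA mulrC.
- exact: (subspaceZ (c0_subspace R) D^-1 (S_c0 _ (T_linf yb))).
apply: supnorm_le => k; rewrite fctE normrZ gtr0_norm ?invr_gt0 // ler_pdivrMl //.
apply: le_trans (supnorm_ub _ (c0_linf (S_c0 _ (T_linf yb)))) _.
apply: le_trans (S_le _ (T_linf yb)) (le_trans (T_le yb) _).
by rewrite ler_wpM2r ?supnorm_ge0 // ltW.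
Qed.

Lemma ext_norm_tmap s : in_Y (@linf R) s -> ext_norm (tmap T s) <= C * ext_norm s.
Proof.
move=> bs; apply: (ler_addgt0_mulr (ext_norm_ge0 bs)) => e e0.
(* Rescale by C + e rather than by C, which may be 0. *)
have CD : C < C + e by rewrite ltrDl.
have D0 : 0 < C + e by apply: le_lt_trans bounded_op_ge0 CD.
rewrite -mulrDl; apply: ext_norm_le => S contrS; case: alphaN => _ _ _ alphaZ.
have contrST := contraction_comp contrS CD.
have -> : tmap S (tmap T s) = tscale (C + e) (tmap (fun y => (C + e)^-1 *: S (T y)) s).
  rewrite /tmap /tscale -!map_comp; apply: eq_map => p /=.
  by rewrite scalerA mulfV ?scale1r // gt_eqF.
rewrite alphaZ ?gtr0_norm //; last exact: (in_Y_contraction contrST bs).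
by rewrite ler_wpM2l ?(ltW D0) // ext_norm_ge.
Qed.

End BoundedOperator.

Lemma ext_norm_left_tensorial : left_tensorial (@linf R) (@supnorm R) ext_norm.
Proof.
split; last 2 first.
- exact: ext_norm_pure.
- by move=> T C T_linf T_lin T_le s; apply: ext_norm_tmap.
split=> [s t bs bt|s|s t|c s]; [exact: ext_norm_teq|exact: ext_norm_zero|exact: ext_norm_cat|].
exact: ext_norm_scale.
Qed.

Lemma c0_tensor_cutoff s e : in_Y (@c0 R) s -> 0 < e ->
  exists N, in_Y (fun y => supnorm (y - cutoff N y) <= e) s.
Proof.
move=> c0s e0.
suff [N closeN] : exists N, forall M, (N <= M)%N ->
    in_Y (fun y => supnorm (y - cutoff M y) <= e) s by exists N; apply: closeN.
elim: s c0s => [|[y x] s IH] /= => [_|[y0 /IH [N2 close2]]]; first by exists 0%N.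
have [N1 close1] := c0_cutoff_close y0 e0.
exists (maxn N1 N2) => M; rewrite geq_max => /andP[N1M N2M].
by split; [apply: close1|apply: close2].
Qed.

Lemma ext_norm_c0 s : in_Y (@c0 R) s -> ext_norm s = alpha s.
Proof.
move=> c0s; have bs := sub_in_Y (@c0_linf R) c0s.
apply/le_anti/andP; split.
  by apply: ext_norm_le => S contrS; apply: alpha_contraction.
apply: (tnorm_le_approx (c0_subspace R) alphaN alpha_pure c0s).
move=> e /(c0_tensor_cutoff c0s) [N closeN].
exists (cutoff N); split=> // [y _|]; first exact: cutoff_c0.
exact: ext_norm_ge (contraction_cutoff N) bs.
Qed.

Section Extensions.
Variable gamma : @pretensor R X -> R.
Hypothesis gammaT : left_tensorial (@linf R) (@supnorm R) gamma.
Hypothesis gamma_alpha : forall s, in_Y (@c0 R) s -> gamma s = alpha s.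

Lemma ext_norm_le_extension s : in_Y (@linf R) s -> ext_norm s <= gamma s.
Proof.
move=> bs; apply: ext_norm_le => S contrS.
rewrite -gamma_alpha; last exact: in_Y_contraction.
case: contrS => S_lin S_c0 S_le; apply: left_tensorial_contraction gammaT _ S_lin S_le bs.
by move=> y /S_c0 /c0_linf.
Qed.

Lemma extension_le_ext_norm s : in_Y (@linf R) s -> gamma s <= ext_norm s.
Proof.
case: (gammaT) => gammaN gamma_pure _ bs.
apply: (tnorm_le_approx (linf_subspace R) gammaN gamma_pure bs) => e e0.
have [|N [pick [cell cellP]]] := finite_net (ys := map fst s) e0.
  by move=> _ /mapP[p ps ->]; apply: (in_YP _ _).1 bs _ ps.
pose S y := cutoff N (y \o pick); pose J (z : nat -> R) := z \o cell.
have contrS : contraction_into_c0 S := contraction_sample N pick.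
exists (J \o S); split.
- by move=> y _; apply/linf_comp/c0_linf/cutoff_c0.
- apply/in_YP => p ps; apply: supnorm_le => n; have [cellN close] := cellP n.
  by rewrite !fctE /J /S /cutoff /= cellN; apply/close/map_f.
have -> : tmap (J \o S) s = tmap J (tmap S s) by rewrite /tmap -map_comp.
have cs := in_Y_contraction contrS bs.
apply: le_trans (left_tensorial_contraction gammaT _ _ _ (sub_in_Y (@c0_linf R) cs)) _.
- by move=> z; apply: linf_comp.
- by [].
- by move=> z; apply: supnorm_comp.
by rewrite gamma_alpha ?ext_norm_ge.
Qed.

End Extensions.
End Extension.

Theorem proposition1p3 (R : realType) (X : completeNormedModType R)
  (alpha : @pretensor R X -> R) :
  left_tensorial (@c0 R) (@supnorm R) alpha ->
  exists beta : @pretensor R X -> R,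
    [/\ left_tensorial (@linf R) (@supnorm R) beta,
        (forall s, in_Y (@c0 R) s -> beta s = alpha s) &
        (forall gamma : @pretensor R X -> R,
            left_tensorial (@linf R) (@supnorm R) gamma ->
            (forall s, in_Y (@c0 R) s -> gamma s = alpha s) ->
            forall s, in_Y (@linf R) s -> gamma s = beta s)].
Proof.
move=> alphaT; exists (ext_norm alpha); split.
- exact: ext_norm_left_tensorial.
- exact: ext_norm_c0.
move=> gamma gammaT gamma_alpha s bs; apply/le_anti/andP; split.
  exact: extension_le_ext_norm.
exact: ext_norm_le_extension.
Qed.
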